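(* Let $\mathcal{P}$ be a parametrised propositional logic program over a finite alphabet $\Sigma=\Sigma_p\cup\Sigma_d$. If the parametrised well-founded model of $\mathcal{P}$ is exact, i.e. of the form $(\mathcal{A},\mathcal{A})$ for some symbolic interpretation $\mathcal{A}\in L^d_p$, then for every $\Sigma$-interpretation $J$: $J\models_{wf}\mathcal{P}$ if and only if $J\models\mathrm{Th}(\mathcal{A})$.
   Context: A parametrised logic program is a finite set of rules $h\leftarrow l_1\wedge\dots\wedge l_n$ with $h\in\Sigma_d$ and each $l_i$ an atom of $\Sigma$ or its negation; $\varphi_q$ is the disjunction of bodies of rules with head $q$. $L_p$: equivalence classes of propositional formulas over $\Sigma_p$ ordered by entailment; $L^d_p$: maps $\Sigma_d\to L_p$ ordered pointwise. For $\mathcal{S}=(\mathcal{A}_t,\mathcal{A}_p)\in(L^d_p)^2$, $\varphi^{\mathcal{S}}$ is computed by substituting $(\overline q,\overline q)$ for $q\in\Sigma_p$ and $(\mathcal{A}_t(q),\mathcal{A}_p(q))$ for $q\in\Sigma_d$, with $\wedge,\vee$ componentwise and $(\neg\psi)^{\mathcal{S}}=(\overline{\neg\psi_p},\overline{\neg\psi_t})$. $\Psi_{\mathcal{P}}(\mathcal{S})(q)=\varphi_q^{\mathcal{S}}$ and $\mathcal{T}_{\mathcal{P}}(\mathcal{A})(q)=\varphi_q^{(\mathcal{A},\mathcal{A})}$ (common component). For an operator $B$ on $M^2$ (precision order $(x,y)\leq_p(u,v)$ iff $x\leq u,v\leq y$), a partial $B$-stable fixpoint is $(x,y)$ with $x=\mathrm{lfp}(B(\cdot,y)_1)$,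 $y=\mathrm{lfp}(B(x,\cdot)_2)$, and the $B$-well-founded fixpoint is the least precise one. The parametrised well-founded model of $\mathcal{P}$ is the $\Psi_{\mathcal{P}}$-well-founded fixpoint of $\mathcal{T}_{\mathcal{P}}$. $\mathrm{Th}(\mathcal{A})=\bigwedge_{q\in\Sigma_d}(q\leftrightarrow\psi_q)$ with $\psi_q$ a representative of $\mathcal{A}(q)$. For $I\in 2^{\Sigma_p}$, $T^I_{\mathcal{P}}$ is the immediate consequence operator on $2^{\Sigma_d}$ with $\Sigma_p$ fixed to $I$ and $\Psi^I_{\mathcal{P}}$ Fitting's three-valued operator on pairs of $\Sigma_d$-interpretations with $\Sigma_p$ fixed to $I$. $J\models_{wf}\mathcal{P}$ iff $(J\cap\Sigma_d,J\cap\Sigma_d)$ is the $\Psi^{J\cap\Sigma_p}_{\mathcal{P}}$-well-founded fixpoint of $T^{J\cap\Sigma_p}_{\mathcal{P}}$. *)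

From mathcomp Require Import all_boot.
Set Implicit Arguments. Unset Strict Implicit. Unset Printing Implicit Defensive.

(* ---------- Alphabet ----------
   Sigma = Sigma_p (+) Sigma_d, with P the finite type of parameter atoms and
   D the finite type of defined atoms; atoms of Sigma are P + D.
   A Sigma-interpretation is a set J : {set (P + D)%type}. *)

Inductive form (A : Type) : Type :=
  | FAtom of A
  | FTop | FBot
  | FNeg of form A
  | FAnd of form A & form A
  | FOr of form A & form A
  | FIff of form A & form A.
Arguments FTop {A}. Arguments FBot {A}.

Fixpoint fsat (A : Type) (v : A -> bool) (f : form A) : bool :=
  match f with
  | FAtom a => v a
  | FTop => true
  | FBot => false
  | FNeg g => ~~ fsat v g
  | FAnd g h => fsat v g && fsat v h
  | FOr g h => fsat v g || fsat v h
  | FIff g h => fsat v g == fsat v h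
  end.

Fixpoint fmap (A B : Type) (m : A -> B) (f : form A) : form B :=
  match f with
  | FAtom a => FAtom (m a)
  | FTop => FTop
  | FBot => FBot
  | FNeg g => FNeg (fmap m g)
  | FAnd g h => FAnd (fmap m g) (fmap m h)
  | FOr g h => FOr (fmap m g) (fmap m h)
  | FIff g h => FIff (fmap m g) (fmap m h)
  end.

(* ---------- Parametrised logic programs ----------
   A literal is (b, a): the atom a if b = true, its negation if b = false.
   A rule h <- l_1 /\ ... /\ l_n is (h, [:: l_1; ...; l_n]) with h in Sigma_d. *)
Definition lit (P D : Type) := (bool * (P + D))%type.
Definition rule (P D : Type) := (D * seq (lit P D))%type.
Definition program (P D : Type) := seq (rule P D).

(* ---------- L_p and L^d_p ----------
   Since Sigma_p is finite, an element of L_p (a class of propositional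
   formulas over Sigma_p modulo equivalence, ordered by entailment) is
   identified with its set of models, a set of Sigma_p-interpretations;
   entailment is inclusion. *)
Definition Lp (P : finType) := {set {set P}}.
Definition Ldp (P D : finType) := {ffun D -> Lp P}.

Definition Ldp_le (P D : finType) (A B : Ldp P D) : Prop :=
  forall q : D, A q \subset B q.

Definition fclass (P : finType) (psi : form P) : Lp P :=
  [set I : {set P} | fsat (fun p => p \in I) psi].

Section AFT.
Variables (M : Type) (le : M -> M -> Prop).

Definition is_lfp (f : M -> M) (x : M) : Prop :=
  f x = x /\ forall y, f y = y -> le x y.

Definition prec_le (S S' : M * M) : Prop := le S.1 S'.1 /\ le S'.2 S.2.

Definition partial_stable (B : M * M -> M * M) (S : M * M) : Prop :=
  is_lfp (fun u => (B (u, S.2)).1) S.1 /\ is_lfp (fun v => (B (S.1, v)).2) S.2.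

Definition is_wf_fixpoint (B : M * M -> M * M) (S : M * M) : Prop :=
  partial_stable B S /\ forall S', partial_stable B S' -> prec_le S S'.
End AFT.

Section Symbolic.
Variables (P D : finType).

Definition lit_sym (S : Ldp P D * Ldp P D) (l : lit P D) : Lp P * Lp P :=
  match l with
  | (true, inl p) => ([set I : {set P} | p \in I], [set I : {set P} | p \in I])
  | (false, inl p) => (~: [set I : {set P} | p \in I], ~: [set I : {set P} | p \in I])
  | (true, inr q) => (S.1 q, S.2 q)
  | (false, inr q) => (~: S.2 q, ~: S.1 q)
  end.

Definition phi_sym (prog : program P D) (q : D) (S : Ldp P D * Ldp P D)
    : Lp P * Lp P :=
  (\bigcup_(r <- prog | r.1 == q) \bigcap_(l <- r.2) (lit_sym S l).1,
   \bigcup_(r <- prog | r.1 == q) \bigcap_(l <- r.2) (lit_sym S l).2).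

Definition Psi_P (prog : program P D) (S : Ldp P D * Ldp P D)
    : Ldp P D * Ldp P D :=
  ([ffun q => (phi_sym prog q S).1], [ffun q => (phi_sym prog q S).2]).

Definition T_P (prog : program P D) (A : Ldp P D) : Ldp P D :=
  [ffun q => (phi_sym prog q (A, A)).1].

Definition param_wf_model (prog : program P D) (S : Ldp P D * Ldp P D) : Prop :=
  is_wf_fixpoint (@Ldp_le P D) (Psi_P prog) S.

(* Th(A) for a choice of representatives psi_q of A(q) *)
Definition Th (psi : D -> form P) : form (P + D)%type :=
  \big[@FAnd _/FTop]_(q : D) FIff (FAtom (inr q)) (fmap inl (psi q)).
End Symbolic.

Section Concrete.
Variables (P D : finType).

Definition lit_conc (I : {set P}) (S : {set D} * {set D}) (l : lit P D)
    : bool * bool :=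
  match l with
  | (true, inl p) => (p \in I, p \in I)
  | (false, inl p) => (p \notin I, p \notin I)
  | (true, inr q) => (q \in S.1, q \in S.2)
  | (false, inr q) => (q \notin S.2, q \notin S.1)
  end.

Definition phi_conc (prog : program P D) (I : {set P}) (q : D)
    (S : {set D} * {set D}) : bool * bool :=
  (has (fun r : rule P D => (r.1 == q) && all (fun l => (lit_conc I S l).1) r.2) prog,
   has (fun r : rule P D => (r.1 == q) && all (fun l => (lit_conc I S l).2) r.2) prog).

Definition Psi_I (prog : program P D) (I : {set P}) (S : {set D} * {set D})
    : {set D} * {set D} :=
  ([set q | (phi_conc prog I q S).1], [set q | (phi_conc prog I q S).2]).

Definition T_I (prog : program P D) (I : {set P}) (x : {set D}) : {set D} :=
  [set q | (phi_conc prog I q (x, x)).1].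

Definition restr_p (J : {set (P + D)%type}) : {set P} := [set p | inl p \in J].
Definition restr_d (J : {set (P + D)%type}) : {set D} := [set q | inr q \in J].

Definition wf_models (prog : program P D) (J : {set (P + D)%type}) : Prop :=
  is_wf_fixpoint (fun x y : {set D} => x \subset y)
    (Psi_I prog (restr_p J)) (restr_d J, restr_d J).
End Concrete.

From mathcomp Require Import all_boot.
Set Implicit Arguments. Unset Strict Implicit. Unset Printing Implicit Defensive.

(* Evaluating a symbolic interpretation at a parameter interpretation I gives a
   set of defined atoms, and L^d_p is the product over all I of these slices.
   The symbolic operator Psi_P acts slice by slice as Fitting's operator
   Psi^I_P, so least fixpoints, partial stable fixpoints and the well-founded
   fixpoint are all computed slice by slice.  If the parametrised well-founded
   model is (A, A), the well-founded model of P with parameters fixed to I is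
   therefore the exact interpretation {q | I in A(q)}, and J is such a model
   exactly when every q in Sigma_d satisfies q <-> psi_q under J. *)

Lemma in_bigcup_seq (T : finType) (R : Type) (s : seq R) (pr : pred R)
    (F : R -> {set T}) x :
  (x \in \bigcup_(r <- s | pr r) F r) = has (fun r => pr r && (x \in F r)) s.
Proof.
rewrite (big_morph (fun B : {set T} => x \in B) (op2 := @setU T) (in_setU x) (in_set0 x)).
by rewrite big_has_cond.
Qed.

Lemma in_bigcap_seq (T : finType) (R : Type) (s : seq R) (F : R -> {set T}) x :
  (x \in \bigcap_(r <- s) F r) = all (fun r => x \in F r) s.
Proof.
rewrite (big_morph (fun B : {set T} => x \in B) (op2 := @setI T) (in_setI x) (in_setT x)).
by rewrite big_all.
Qed.

Section Slices.
Variables (P D : finType).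

Definition slice (I : {set P}) (X : Ldp P D) : {set D} := [set q | I \in X q].

Definition slice2 (I : {set P}) (S : Ldp P D * Ldp P D) : {set D} * {set D} :=
  (slice I S.1, slice I S.2).

Lemma slice_inj (X Y : Ldp P D) : (forall I, slice I X = slice I Y) -> X = Y.
Proof.
move=> eqXY; apply/ffunP => q; apply/setP => I.
by have /setP/(_ q) := eqXY I; rewrite !inE.
Qed.

Lemma Ldp_leP (X Y : Ldp P D) :
  Ldp_le X Y <-> forall I, slice I X \subset slice I Y.
Proof.
split=> [leXY I | leXY q]; apply/subsetP.
- by move=> q; rewrite !inE; apply: (subsetP (leXY q)).
- by move=> I XqI; have /subsetP/(_ q) := leXY I; rewrite !inE; apply.
Qed.

Definition reslice (X : Ldp P D) (I0 : {set P}) (u : {set D}) : Ldp P D :=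
  [ffun q => [set I | if I == I0 then q \in u else I \in X q]].

Lemma slice_reslice X I0 u I :
  slice I (reslice X I0 u) = if I == I0 then u else slice I X.
Proof. by apply/setP => q; rewrite !inE ffunE inE; case: (I == I0); rewrite ?inE. Qed.

Lemma slice_Psi_P prog S I : slice2 I (Psi_P prog S) = Psi_I prog I (slice2 I S).
Proof.
have slice_lit l : (I \in (lit_sym S l).1) = (lit_conc I (slice2 I S) l).1 /\
                   (I \in (lit_sym S l).2) = (lit_conc I (slice2 I S) l).2.
  by case: l => [[] [p|q]]; rewrite /= !inE.
congr pair; apply/setP => q; rewrite !inE ffunE /= in_bigcup_seq;
  apply: eq_has => r; rewrite in_bigcap_seq; congr andb; apply: eq_all => l;
  by case: (slice_lit l).
Qed.

Section LeastFixpoint.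
Variables (f : Ldp P D -> Ldp P D) (g : {set P} -> {set D} -> {set D}).
Hypothesis slice_f : forall X I, slice I (f X) = g I (slice I X).

(* Minimality in one slice is tested against X with that slice replaced. *)
Lemma is_lfp_slice X :
  is_lfp (@Ldp_le P D) f X <->
  forall I, is_lfp (fun x y : {set D} => x \subset y) (g I) (slice I X).
Proof.
split=> [[fX minX] I | lfpX].
- split=> [|y gy]; first by rewrite -slice_f fX.
  have fXy : f (reslice X I y) = reslice X I y.
    apply: slice_inj => I'; rewrite slice_f !slice_reslice.
    by case: eqP => [->//|_]; rewrite -slice_f fX.
  by have /Ldp_leP/(_ I) := minX _ fXy; rewrite slice_reslice eqxx.
- split=> [|Y fY].
    by apply: slice_inj => I; rewrite slice_f; exact: (lfpX I).1.
  by apply/Ldp_leP => I; apply: (lfpX I).2; rewrite -slice_f fY.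
Qed.

End LeastFixpoint.

Lemma partial_stable_slice prog S :
  partial_stable (@Ldp_le P D) (Psi_P prog) S <->
  forall I, partial_stable (fun x y : {set D} => x \subset y)
              (Psi_I prog I) (slice2 I S).
Proof.
have slice_fst X I :
    slice I (Psi_P prog (X, S.2)).1 = (Psi_I prog I (slice I X, slice I S.2)).1.
  by have /(congr1 fst) := slice_Psi_P prog (X, S.2) I.
have slice_snd X I :
    slice I (Psi_P prog (S.1, X)).2 = (Psi_I prog I (slice I S.1, slice I X)).2.
  by have /(congr1 snd) := slice_Psi_P prog (S.1, X) I.
have lfp_fst :=
  is_lfp_slice (g := fun I u => (Psi_I prog I (u, slice I S.2)).1) slice_fst S.1.
have lfp_snd :=
  is_lfp_slice (g := fun I v => (Psi_I prog I (slice I S.1, v)).2) slice_snd S.2.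
split=> [[/lfp_fst st1 /lfp_snd st2] I | st]; first by split.
by split; [apply/lfp_fst | apply/lfp_snd] => I; case: (st I).
Qed.

Lemma wf_fixpoint_slice prog S I0 :
  param_wf_model prog S ->
  is_wf_fixpoint (fun x y : {set D} => x \subset y) (Psi_I prog I0) (slice2 I0 S).
Proof.
move=> [/partial_stable_slice stS minS]; split=> [|[u v] stuv]; first exact: stS.
have : partial_stable (@Ldp_le P D) (Psi_P prog) (reslice S.1 I0 u, reslice S.2 I0 v).
  apply/partial_stable_slice => I; rewrite /slice2 /= !slice_reslice.
  by case: eqP => [->|].
move=> /minS [/Ldp_leP/(_ I0) le1 /Ldp_leP/(_ I0) le2].
by rewrite !slice_reslice eqxx in le1 le2.
Qed.

End Slices.

Lemma wf_fixpoint_unique (T : finType)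
    (B : {set T} * {set T} -> {set T} * {set T}) S S' :
  is_wf_fixpoint (fun x y : {set T} => x \subset y) B S ->
  is_wf_fixpoint (fun x y : {set T} => x \subset y) B S' -> S = S'.
Proof.
case: S S' => [x y] [x' y'] [stS minS] [stS' minS'].
have [/= le_xx' le_y'y] := minS _ stS'; have [/= le_x'x le_yy'] := minS' _ stS.
by congr pair; apply/eqP; rewrite eqEsubset ?le_xx' ?le_yy'.
Qed.

Lemma eq_fsat (A : Type) (v w : A -> bool) (f : form A) :
  v =1 w -> fsat v f = fsat w f.
Proof. by move=> eq_vw; elim: f => /=; congruence. Qed.

Lemma fsat_fmap (A B : Type) (m : A -> B) (v : B -> bool) (f : form A) :
  fsat v (fmap m f) = fsat (v \o m) f.
Proof. by elim: f => /=; congruence. Qed.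

Lemma fsat_Th (P D : finType) (psi : D -> form P) (v : P + D -> bool) :
  fsat v (Th psi) = [forall q, v (inr q) == fsat (v \o inl) (psi q)].
Proof.
rewrite /Th (big_morph (fsat v) (id1 := true) (op1 := andb)) // big_andE.
by apply: eq_forallb => q /=; rewrite fsat_fmap.
Qed.

Theorem theorem4p11 (P D : finType) (prog : program P D) (A : Ldp P D)
  (psi : D -> form P) :
  param_wf_model prog (A, A) ->
  (forall q : D, fclass (psi q) = A q) ->
  forall J : {set (P + D)%type},
    wf_models prog J <-> fsat (fun a => a \in J) (Th psi).
Proof.
move=> wfA psiA J; set I := restr_p J.
have wfI := wf_fixpoint_slice I wfA.
have wf_modelsE : wf_models prog J <-> restr_d J = slice I A.
  split=> [/(wf_fixpoint_unique wfI) [] // | eqJ]; rewrite /wf_models eqJ; exact: wfI.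
have sat_psi q : fsat (fun p => inl p \in J) (psi q) = (I \in A q).
  by rewrite -psiA inE; apply: eq_fsat => p; rewrite inE.
rewrite fsat_Th; split=> [/wf_modelsE eqJ | /forallP eqJ].
- by apply/forallP => q; have /setP/(_ q) := eqJ; rewrite !inE sat_psi => ->.
- by apply/wf_modelsE/setP => q; rewrite !inE -sat_psi; apply/eqP/eqJ.
Qed.
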